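(* Consider the controlled SEIR system and cost described in the context. There exists a constant $C>0$ such that $J_\infty(x_0,u_{\mathrm{nom}})<C$ for all $x_0\in\mathcal{M}$. Consequently, $V_\infty(x_0)<C$ for all $x_0\in\mathcal{M}$.
   Context: Fix parameters $\eta>0$, $0<\beta_{\min}\le\beta_{\mathrm{nom}}$, $0<\gamma_{\mathrm{nom}}\le\gamma_{\max}<\infty$ and $I_{\max}\in(0,1)$. Let $U:=[\beta_{\min},\beta_{\mathrm{nom}}]\times[\gamma_{\mathrm{nom}},\gamma_{\max}]$ and let $\mathcal{U}$ be the set of measurable, locally integrable functions $u=(\beta,\gamma):[0,\infty)\to U$; $u_{\mathrm{nom}}\in\mathcal{U}$ denotes the constant control $(\beta_{\mathrm{nom}},\gamma_{\mathrm{nom}})$. Let $\Pi:=\{(S,E,I)\in[0,1]^3: S+E+I\le 1\}$. For $x_0\in\Pi$ and $u\in\mathcal{U}$, $x(\cdot;x_0,u)=(S,E,I)$ denotes the unique solution of $\dot S=-\beta(t)SI$, $\dot E=\beta(t)SI-\eta E$, $\dot I=\eta E-\gamma(t)I$ with $x(0)=x_0$; it stays in $\Pi$. Let $G_\Pi:=\{(S,E,I)\in\Pi: I\le I_{\max}\}$ and $\mathcal{M}:=\{x_0\in G_\Pi: x(t;x_0,u)\in G_\Pi\ \forall t\ge0,\ \forall u\in\mathcal{U}\}$. The stage cost is $\ell(x,u):=E^2+I^2+(\beta-\beta_{\mathrm{nom}})^2+(\gamma-\gamma_{\mathrm{nom}})^2$ for $x=(S,E,I)$, $u=(\beta,\gamma)$;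 $J_\infty(x_0,u):=\int_0^\infty \ell(x(t;x_0,u),u(t))\,dt$, and $V_\infty(x_0):=\inf\{J_\infty(x_0,u): u\in\mathcal{U},\ x(t;x_0,u)\in G_\Pi\ \forall t\ge0\}$ (with $\inf\emptyset=+\infty$). *)

From HB Require Import structures.
From mathcomp Require Import all_boot all_order all_algebra.
From mathcomp Require Import all_classical all_reals all_analysis.
Set Implicit Arguments. Unset Strict Implicit. Unset Printing Implicit Defensive.
Import Order.TTheory GRing.Theory Num.Theory.
Local Open Scope classical_set_scope.
Local Open Scope ring_scope.

Section SEIR.
Variable R : realType.

(* state (S,E,I) and control (beta,gamma) *)
Definition state := (R * R * R)%type.
Definition control := (R * R)%type.
Definition Sc (x : state) : R := x.1.1.
Definition Ec (x : state) : R := x.1.2.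
Definition Ic (x : state) : R := x.2.

Definition Pi : set state := [set x | 0 <= Sc x <= 1 /\ 0 <= Ec x <= 1 /\
  0 <= Ic x <= 1 /\ Sc x + Ec x + Ic x <= 1].

Definition GPi (Imax : R) : set state := [set x | Pi x /\ Ic x <= Imax].

Definition Uset (bmin bnom gnom gmax : R) : set control :=
  [set v | bmin <= v.1 <= bnom /\ gnom <= v.2 <= gmax].

Definition Ucal (bmin bnom gnom gmax : R) : set (R -> control) :=
  [set u : R -> control | (forall t : R, 0 <= t -> Uset bmin bnom gnom gmax (u t)) /\
    measurable_fun (`[0%R, +oo[ : set R) (fun t => (u t).1) /\
    measurable_fun (`[0%R, +oo[ : set R) (fun t => (u t).2) /\
    (forall T, 0 <= T ->
       (@lebesgue_measure R).-integrable `[0%R, T] (fun t => ((u t).1)%:E) /\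
       (@lebesgue_measure R).-integrable `[0%R, T] (fun t => ((u t).2)%:E))].

Definition unom (bnom gnom : R) : R -> control := fun _ => (bnom, gnom).

Definition seir_rhs (eta : R) (x : state) (v : control) : state :=
  (- v.1 * Sc x * Ic x,
   v.1 * Sc x * Ic x - eta * Ec x,
   eta * Ec x - v.2 * Ic x).

(* (Caratheodory) solution on [0,oo) with x(0) = x0, in integral form *)
Definition is_solution (eta : R) (x0 : state) (u : R -> control)
    (x : R -> state) : Prop :=
  x 0 = x0 /\
  forall t, 0 <= t ->
    let f := fun s => seir_rhs eta (x s) (u s) in
    (@lebesgue_measure R).-integrable `[0%R, t] (fun s => (Sc (f s))%:E) /\
    (@lebesgue_measure R).-integrable `[0%R, t] (fun s => (Ec (f s))%:E) /\
    (@lebesgue_measure R).-integrable `[0%R, t] (fun s => (Ic (f s))%:E) /\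
    Sc (x t) = Sc x0 + Rintegral (@lebesgue_measure R) `[0%R, t] (fun s => Sc (f s)) /\
    Ec (x t) = Ec x0 + Rintegral (@lebesgue_measure R) `[0%R, t] (fun s => Ec (f s)) /\
    Ic (x t) = Ic x0 + Rintegral (@lebesgue_measure R) `[0%R, t] (fun s => Ic (f s)).

(* traj is "the" solution map x(.;x0,u): for x0 in Pi and u in Ucal,
   traj x0 u solves the system and stays in Pi (facts stated in the context) *)
Definition is_solution_map (eta bmin bnom gnom gmax : R)
    (traj : state -> (R -> control) -> R -> state) : Prop :=
  forall x0 u, Pi x0 -> Ucal bmin bnom gnom gmax u ->
    is_solution eta x0 u (traj x0 u) /\ (forall t, 0 <= t -> Pi (traj x0 u t)).

Definition Mset (bmin bnom gnom gmax Imax : R)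
    (traj : state -> (R -> control) -> R -> state) : set state :=
  [set x0 | GPi Imax x0 /\
    forall u, Ucal bmin bnom gnom gmax u ->
      forall t, 0 <= t -> GPi Imax (traj x0 u t)].

Definition stage_cost (bnom gnom : R) (x : state) (v : control) : R :=
  Ec x ^+ 2 + Ic x ^+ 2 + (v.1 - bnom) ^+ 2 + (v.2 - gnom) ^+ 2.

Definition Jinf (bnom gnom : R) (traj : state -> (R -> control) -> R -> state)
    (x0 : state) (u : R -> control) : \bar R :=
  (\int[@lebesgue_measure R]_(t in `[0%R, +oo[)
      (stage_cost bnom gnom (traj x0 u t) (u t))%:E)%E.

(* V_inf(x0) = inf over admissible controls keeping x in G_Pi (inf empty = +oo) *)
Definition Vinf (bmin bnom gnom gmax Imax : R)
    (traj : state -> (R -> control) -> R -> state) (x0 : state) : \bar R :=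
  ereal_inf [set Jinf bnom gnom traj x0 u | u in
    [set u | Ucal bmin bnom gnom gmax u /\
             forall t, 0 <= t -> GPi Imax (traj x0 u t)]].

End SEIR.

(* Along the nominal control the combinations S + E and S + E + I are
   nonincreasing, with (S + E)' = - eta E and (S + E + I)' = - gamma_nom I.
   As both stay in [0, 1], every finite-horizon integral of E is at most
   1 / eta and every one of I at most 1 / gamma_nom.  On Pi the running cost
   E^2 + I^2 is at most E + I, so J_inf(x0, u_nom) <= 1 / eta + 1 / gamma_nom
   by monotone convergence; u_nom is admissible from every point of M, which
   bounds V_inf by the same constant. *)

From HB Require Import structures.
From mathcomp Require Import all_boot all_order all_algebra.
From mathcomp Require Import all_classical all_reals all_analysis.
From mathcomp Require Import measurable_realfun ring lra.
Import Order.TTheory GRing.Theory Num.Theory.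
Local Open Scope classical_set_scope.
Local Open Scope ring_scope.

Section LebesgueIntegrals.
Context {R : realType}.
Local Notation mu := (@lebesgue_measure R).

(* [lebesgue_measure] lives on [measurableTypeR R], whose measurable sets are
   those of the default structure on [R] but not syntactically so: sets are
   typed accordingly to let unification find the measure. *)
Lemma integrable_EFinD {D : set (measurableTypeR R)} {f g : R -> R} :
  measurable D ->
  mu.-integrable D (EFin \o f) -> mu.-integrable D (EFin \o g) ->
  mu.-integrable D (EFin \o (f \+ g)).
Proof.
move=> mD intf intg.
apply: (eq_integrable mD _ _ _ (integrableD mD intf intg)).
by move=> s _; rewrite /= EFinD.
Qed.

(* [y0 + \int h] is the final value of a quantity that starts at [y0 <= 1],
   ends nonnegative and is drained at rate [c * g]. *)
Lemma outflow_Rintegral_le {D : set (measurableTypeR R)} (c y0 : R)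
    (g h : R -> R) :
  measurable D -> 0 < c -> mu.-integrable D (EFin \o h) ->
  (forall s, h s = - (c * g s)) ->
  y0 <= 1 -> 0 <= y0 + \int[mu]_(s in D) h s ->
  mu.-integrable D (EFin \o g) /\ \int[mu]_(s in D) g s <= c^-1.
Proof.
move=> mD c0 inth hg y01 y0h.
have gh s : g s = - c^-1 * h s.
  by rewrite hg mulrN mulNr opprK mulKf ?gt_eqF.
split.
  apply: (eq_integrable mD _ _ _ (integrableZl mD (- c^-1) inth)).
  by move=> s _; rewrite /= -EFinM gh.
under eq_Rintegral do rewrite gh.
rewrite RintegralZl //; have ci0 : 0 < c^-1 by rewrite invr_gt0.
nra.
Qed.

Lemma ge0_integral_itv0y_le (f : R -> R) (B : R) :
  (forall t : R, 0 <= t -> 0 <= f t) ->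
  (forall t : R, 0 <= t ->
     measurable_fun (`[0%R, t] : set (measurableTypeR R)) f) ->
  (forall t : R, 0 <= t -> (\int[mu]_(s in `[0%R, t]) (f s)%:E <= B%:E)%E) ->
  (\int[mu]_(s in `[0%R, +oo[) (f s)%:E <= B%:E)%E.
Proof.
move=> f0 mf intB; rewrite itv0y_bigcup0S.
have nd : nondecreasing_seq (fun n => `[0, n.+1%:R]%classic : set R).
  move=> m n mn; rewrite subsetEset; apply: subset_itvl.
  by rewrite bnd_simp ler_nat.
have mfE n : measurable_fun (`[0%R, n.+1%:R] : set R) (fun t => (f t)%:E).
  by apply/measurable_EFinP; exact: mf.
have f0E n s : `[0%R, n.+1%:R]%classic s -> (0 <= (f s)%:E)%E.
  by rewrite /= in_itv /= lee_fin => /andP[s0 _]; exact: f0.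
have cv := ge0_nondecreasing_set_cvg_integral nd
  (fun n => measurable_itv _) mfE f0E (mu := mu).
rewrite -(cvg_lim _ cv) //; apply: lime_le; first exact: cvgP cv.
by apply: nearW => n; exact: intB.
Qed.

End LebesgueIntegrals.

Section SEIRNominal.
Context {R : realType} {eta bnom gnom : R}.
Local Notation mu := (@lebesgue_measure R).

Lemma seir_rhs_SE (x : state R) (v : control R) :
  Sc (seir_rhs eta x v) + Ec (seir_rhs eta x v) = - (eta * Ec x).
Proof. by rewrite /seir_rhs /Sc /Ec /=; ring. Qed.

Lemma seir_rhs_SEI (x : state R) (v : control R) :
  Sc (seir_rhs eta x v) + Ec (seir_rhs eta x v) + Ic (seir_rhs eta x v) =
  - (v.2 * Ic x).
Proof. by rewrite /seir_rhs /Sc /Ec /Ic /=; ring. Qed.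

Lemma PiP {y : state R} : Pi y ->
  [/\ 0 <= Sc y, 0 <= Ec y, 0 <= Ic y & Sc y + Ec y + Ic y <= 1].
Proof. by case=> [/andP[S0 _] [/andP[E0 _] [/andP[I0 _] SEI]]]. Qed.

Context {x0 : state R} {x : R -> state R}.
Hypotheses (eta0 : 0 < eta) (gnom0 : 0 < gnom) (Px0 : Pi x0).
Hypotheses (solx : is_solution eta x0 (unom bnom gnom) x)
  (Px : forall t, 0 <= t -> Pi (x t)).

Lemma nominal_exposed_Rintegral_le t : 0 <= t ->
  mu.-integrable `[0%R, t] (fun s => (Ec (x s))%:E) /\
  \int[mu]_(s in `[0%R, t]) Ec (x s) <= eta^-1.
Proof.
move=> t0; have [iS [iE [_ [eS [eE _]]]]] := solx.2 t t0.
have [_ _ I0 SEI0] := PiP Px0; have [St Et It _] := PiP (Px t t0).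
apply: (@outflow_Rintegral_le _ _ _ (Sc x0 + Ec x0) _ _ (measurable_itv _)
  eta0).
- exact: integrable_EFinD (measurable_itv _) iS iE.
- by move=> s; exact: seir_rhs_SE.
- lra.
- by rewrite RintegralD //=; lra.
Qed.

Lemma nominal_infected_Rintegral_le t : 0 <= t ->
  mu.-integrable `[0%R, t] (fun s => (Ic (x s))%:E) /\
  \int[mu]_(s in `[0%R, t]) Ic (x s) <= gnom^-1.
Proof.
move=> t0; have [iS [iE [iI [eS [eE eI]]]]] := solx.2 t t0.
have [_ _ _ SEI0] := PiP Px0; have [St Et It _] := PiP (Px t t0).
have mt : measurable (`[0%R, t] : set (measurableTypeR R)) := measurable_itv _.
apply: (@outflow_Rintegral_le _ _ _ (Sc x0 + Ec x0 + Ic x0) _ _ mt gnom0).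
- exact: integrable_EFinD mt (integrable_EFinD mt iS iE) iI.
- by move=> s; exact: seir_rhs_SEI.
- by [].
- rewrite (RintegralD mt) ?(integrable_EFinD mt iS iE) //.
  by rewrite (RintegralD mt iS iE); lra.
Qed.

Lemma nominal_cost_measurable t : 0 <= t ->
  measurable_fun (`[0%R, t] : set (measurableTypeR R))
    (fun s => Ec (x s) ^+ 2 + Ic (x s) ^+ 2).
Proof.
move=> t0; have [/integrableP[mE _] _] := nominal_exposed_Rintegral_le t t0.
have [/integrableP[mI _] _] := nominal_infected_Rintegral_le t t0.
by apply: measurable_funD; apply: measurable_funX; exact/measurable_EFinP.
Qed.

Lemma nominal_cost_integral_le t : 0 <= t ->
  (\int[mu]_(s in `[0%R, t]) (Ec (x s) ^+ 2 + Ic (x s) ^+ 2)%:E <=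
   (eta^-1 + gnom^-1)%:E)%E.
Proof.
move=> t0.
have mt : measurable (`[0%R, t] : set (measurableTypeR R)) := measurable_itv _.
have [iE intE] := nominal_exposed_Rintegral_le t t0.
have [iI intI] := nominal_infected_Rintegral_le t t0.
have /integrableP[mE _] := iE; have /integrableP[mI _] := iI.
apply: (@le_trans _ _
  (\int[mu]_(s in `[0%R, t]) ((Ec (x s))%:E + (Ic (x s))%:E))%E).
  apply: ge0_le_integral => //.
  - by move=> s _; rewrite lee_fin addr_ge0 // sqr_ge0.
  - by apply/measurable_EFinP; exact: nominal_cost_measurable.
  - exact: emeasurable_funD.
  - move=> s; rewrite /= in_itv /= => /andP[s0 _].
    have [S0 E0 I0 SEI] := PiP (Px s s0).
    by rewrite -EFinD lee_fin; nra.
rewrite integralD //.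
rewrite -(fineK (integrable_fin_num mt iE)) -(fineK (integrable_fin_num mt iI)).
by rewrite -EFinD lee_fin lerD.
Qed.

End SEIRNominal.

Lemma unom_admissible {R : realType} {bmin bnom gnom gmax : R} :
  bmin <= bnom -> gnom <= gmax -> Ucal bmin bnom gnom gmax (unom bnom gnom).
Proof.
move=> bminnom gnommax.
have cst_integrable (c T : R) :
    (@lebesgue_measure R).-integrable `[0%R, T] (fun=> c%:E).
  apply: (@continuous_compact_integrable _ (fun=> c)).
    exact: segment_compact.
  by move=> s; exact: cvg_cst.
split; first by move=> t _; rewrite /Uset /unom /= bminnom gnommax !lexx.
split; [|split]; [exact: measurable_cst..|].
by move=> T _; split; exact: cst_integrable.
Qed.

Lemma stage_cost_unom (R : realType) (bnom gnom : R) (y : state R) (t : R) :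
  stage_cost bnom gnom y (unom bnom gnom t) = Ec y ^+ 2 + Ic y ^+ 2.
Proof. by rewrite /stage_cost /unom /= !subrr expr0n /= !addr0. Qed.

Lemma Jinf_unom_le {R : realType} {eta bmin bnom gnom gmax : R}
    {traj : state R -> (R -> control R) -> R -> state R} {x0 : state R} :
  0 < eta -> bmin <= bnom -> 0 < gnom -> gnom <= gmax ->
  is_solution_map eta bmin bnom gnom gmax traj -> Pi x0 ->
  (Jinf bnom gnom traj x0 (unom bnom gnom) <= (eta^-1 + gnom^-1)%:E)%E.
Proof.
move=> eta0 bminnom gnom0 gnommax solmap Px0.
have [solx Px] := solmap x0 _ Px0 (unom_admissible bminnom gnommax).
rewrite /Jinf; under eq_integral do rewrite stage_cost_unom.
apply: ge0_integral_itv0y_le => t t0.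
- by rewrite addr_ge0 ?sqr_ge0.
- exact: nominal_cost_measurable eta0 gnom0 Px0 solx Px t t0.
- exact: nominal_cost_integral_le eta0 gnom0 Px0 solx Px t t0.
Qed.

Lemma Vinf_le_Jinf (R : realType) (bmin bnom gnom gmax Imax : R)
    (traj : state R -> (R -> control R) -> R -> state R) (x0 : state R)
    (u : R -> control R) :
  Ucal bmin bnom gnom gmax u -> (forall t, 0 <= t -> GPi Imax (traj x0 u t)) ->
  (Vinf bmin bnom gnom gmax Imax traj x0 <= Jinf bnom gnom traj x0 u)%E.
Proof. by move=> Uu Gu; apply: ereal_inf_lbound; exists u. Qed.

Theorem lemma3 (R : realType) (eta bmin bnom gnom gmax Imax : R)
  (traj : state R -> (R -> control R) -> R -> state R) :
  0 < eta -> 0 < bmin -> bmin <= bnom -> 0 < gnom -> gnom <= gmax ->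
  0 < Imax -> Imax < 1 ->
  is_solution_map eta bmin bnom gnom gmax traj ->
  exists C : R, 0 < C /\
    (forall x0, Mset bmin bnom gnom gmax Imax traj x0 ->
       (Jinf bnom gnom traj x0 (unom bnom gnom) < C%:E)%E) /\
    (forall x0, Mset bmin bnom gnom gmax Imax traj x0 ->
       (Vinf bmin bnom gnom gmax Imax traj x0 < C%:E)%E).
Proof.
move=> eta0 _ bminnom gnom0 gnommax _ _ solmap.
set B := eta^-1 + gnom^-1.
have B0 : 0 < B by rewrite addr_gt0 // invr_gt0.
have JB x0 : Mset bmin bnom gnom gmax Imax traj x0 ->
    (Jinf bnom gnom traj x0 (unom bnom gnom) < (B + 1)%:E)%E.
  move=> [[Px0 _] _].
  apply: le_lt_trans (Jinf_unom_le eta0 bminnom gnom0 gnommax solmap Px0) _.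
  by rewrite lte_fin ltrDl.
exists (B + 1); split; first by rewrite addr_gt0.
split=> // x0 Mx0; apply: le_lt_trans (JB x0 Mx0).
apply: Vinf_le_Jinf; first exact: unom_admissible.
by case: Mx0 => _; apply; exact: unom_admissible.
Qed.
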